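(* Let $f:\mathbb{Z}^n\to\mathbb{R}\cup\{+\infty\}$ be a function satisfying condition (SSQM$^\natural$). For $x,y\in\mathrm{dom}\,f$, if $f(x)>f(y)$, then there exist some $i\in\mathrm{supp}^+(x-y)\cup\{0\}$ and $j\in\mathrm{supp}^-(x-y)\cup\{0\}$ satisfying $f(x)>f(x-\chi_i+\chi_j)$.
   Context: $N=\{1,\dots,n\}$. For $i\in N$, $\chi_i\in\{0,1\}^n$ is the characteristic vector of $i$, and $\chi_0=0$. $\mathrm{dom}\,f=\{x\in\mathbb{Z}^n\mid f(x)<+\infty\}$. For $x,y\in\mathbb{Z}^n$, $\mathrm{supp}^+(x-y)=\{i\in N\mid x(i)>y(i)\}$ and $\mathrm{supp}^-(x-y)=\{j\in N\mid x(j)<y(j)\}$. Condition (SSQM$^\natural$): for all $x,y\in\mathrm{dom}\,f$ and all $i\in\mathrm{supp}^+(x-y)$ there exists $j\in\mathrm{supp}^-(x-y)\cup\{0\}$ such that at least one of the following holds: (a) $f(x-\chi_i+\chi_j)<f(x)$; (b) $f(y+\chi_i-\chi_j)<f(y)$; (c) $f(x-\chi_i+\chi_j)=f(x)$ and $f(y+\chi_i-\chi_j)=f(y)$. *)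

From HB Require Import structures.
From mathcomp Require Import all_boot all_order all_algebra.
From mathcomp Require Import reals constructive_ereal.
Set Implicit Arguments. Unset Strict Implicit. Unset Printing Implicit Defensive.
Import Order.TTheory GRing.Theory Num.Theory.
Local Open Scope ring_scope.
Local Open Scope ereal_scope.

(* Points of Z^n are integer row vectors 'rV[int]_n; the index set N = {1..n}
   is 'I_n. An index in N ∪ {0} is an option 'I_n, None standing for 0. *)

Definition chi (n : nat) (i : option 'I_n) : 'rV[int]_n :=
  if i is Some k then delta_mx ord0 k else 0%R.

(* f : Z^n -> R ∪ {+oo}, modelled as a function into \bar R never taking -oo *)
Definition no_minus_infty (R : realType) n (f : 'rV[int]_n -> \bar R) : Prop :=
  forall x, f x <> -oo.

Definition in_dom (R : realType) n (f : 'rV[int]_n -> \bar R) (x : 'rV[int]_n) : Prop :=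
  f x < +oo.

Definition in_supp_plus n (x y : 'rV[int]_n) (i : 'I_n) : Prop := (y ord0 i < x ord0 i)%R.
Definition in_supp_minus n (x y : 'rV[int]_n) (j : 'I_n) : Prop := (x ord0 j < y ord0 j)%R.

Definition in_supp_plus0 n (x y : 'rV[int]_n) (i : option 'I_n) : Prop :=
  if i is Some k then in_supp_plus x y k else True.
Definition in_supp_minus0 n (x y : 'rV[int]_n) (j : option 'I_n) : Prop :=
  if j is Some k then in_supp_minus x y k else True.

Definition SSQMnat (R : realType) n (f : 'rV[int]_n -> \bar R) : Prop :=
  forall x y, in_dom f x -> in_dom f y ->
  forall i : 'I_n, in_supp_plus x y i ->
  exists j : option 'I_n, in_supp_minus0 x y j /\
    [\/ f (x - chi (Some i) + chi j)%R < f x,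
        f (y + chi (Some i) - chi j)%R < f y
      | f (x - chi (Some i) + chi j)%R = f x /\ f (y + chi (Some i) - chi j)%R = f y].

From HB Require Import structures.
From mathcomp Require Import all_boot all_order all_algebra.
From mathcomp Require Import reals constructive_ereal.
From mathcomp Require Import zify.
Set Implicit Arguments. Unset Strict Implicit. Unset Printing Implicit Defensive.
Import Order.TTheory GRing.Theory Num.Theory.
Local Open Scope ring_scope.

(* Fix x and let y move towards x.  If supp^+(x - y) contains some i,
   (SSQM^natural) applied to (x, y, i) either gives the wanted exchange at x,
   or a point y' = y + chi_i - chi_j with f y' <= f y.  If supp^+(x - y) is
   empty but supp^-(x - y) contains some j, (SSQM^natural) applied to (y, x, j)
   must take its partner in supp^-(y - x) = supp^+(x - y), hence 0, and gives
   either the exchange x + chi_j or y' = y - chi_j with f y' <= f y.  In both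
   cases y' is strictly closer to x in the l1 distance and the supports of
   x - y' are contained in those of x - y, so induction on the distance
   concludes; y = x is excluded by f y < f x. *)

Section Closer.
Variable n : nat.
Implicit Types x y z : 'rV[int]_n.

Definition l1dist x y : nat := \sum_(k < n) `|x ord0 k - y ord0 k|%N.

Definition supp_sub x z' z := forall k,
  (in_supp_plus x z' k -> in_supp_plus x z k) /\
  (in_supp_minus x z' k -> in_supp_minus x z k).

Definition closer x z' z := supp_sub x z' z /\ (l1dist x z' < l1dist x z)%N.

Lemma closer_trans x a b c : closer x a b -> closer x b c -> closer x a c.
Proof.
move=> [sab dab] [sbc dbc]; split; last exact: ltn_trans dab dbc.
by move=> k; have [? ?] := sab k; have [? ?] := sbc k; split; auto.
Qed.

Lemma closer_supp_plus0 x z' z i :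
  closer x z' z -> in_supp_plus0 x z' i -> in_supp_plus0 x z i.
Proof. by case: i => //= k [/(_ k) []]. Qed.

Lemma closer_supp_minus0 x z' z j :
  closer x z' z -> in_supp_minus0 x z' j -> in_supp_minus0 x z j.
Proof. by case: j => //= k [/(_ k) []]. Qed.

Lemma closer_unit_step x z k (s : int) :
  s = 1 /\ in_supp_plus x z k \/ s = -1 /\ in_supp_minus x z k ->
  closer x (z + s *: chi (Some k)) z.
Proof.
rewrite /in_supp_plus /in_supp_minus => hs; split.
  move=> k'; rewrite /in_supp_plus /in_supp_minus !mxE /=.
  by case: eqP => [->|_] /=; lia.
rewrite /l1dist (bigD1 k) // [in X in (_ < X)%N](bigD1 k) //=.
have -> : \sum_(k' < n | k' != k) `|x ord0 k' - (z + s *: chi (Some k))%R ord0 k'|%N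
           = \sum_(k' < n | k' != k) `|x ord0 k' - z ord0 k'|%N.
  by apply: eq_bigr => k' hk; rewrite !mxE (negbTE hk) mulr0 addr0.
rewrite ltn_add2r !mxE /= eqxx mulr1; lia.
Qed.

Lemma closer_sub_chi x z j :
  in_supp_minus x z j -> closer x (z - chi (Some j)) z.
Proof. by move=> hj; rewrite -scaleN1r; apply: closer_unit_step; right. Qed.

Lemma closer_exchange x z i j :
  in_supp_plus x z i -> in_supp_minus0 x z j ->
  closer x (z + chi (Some i) - chi j) z.
Proof.
move=> hi hj; have up : closer x (z + chi (Some i)) z.
  by rewrite -[chi _]scale1r; apply: closer_unit_step; left.
case: j hj => [j|] /= hj; last by rewrite subr0.
apply: closer_trans up; apply: closer_sub_chi.
move: hj; rewrite /in_supp_minus !mxE; case: (_ && _) => /=; lia.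
Qed.

End Closer.

Section Descent.
Variables (R : realType) (n : nat) (f : 'rV[int]_n -> \bar R).
Hypothesis ssqm : SSQMnat f.
Implicit Types x y : 'rV[int]_n.

Definition improving_exchange x y := exists i j : option 'I_n,
  [/\ in_supp_plus0 x y i, in_supp_minus0 x y j & (f (x - chi i + chi j) < f x)%E].

Definition descent_step x y :=
  improving_exchange x y \/ exists2 y', closer x y' y & (f y' <= f y)%E.

Lemma improving_exchange_closer x y y' :
  closer x y' y -> improving_exchange x y' -> improving_exchange x y.
Proof.
move=> cy [i [j [hi hj hf]]]; exists i, j; split=> //.
  exact: closer_supp_plus0 cy hi.
exact: closer_supp_minus0 cy hj.
Qed.

Lemma descent_step_supp_plus x y i :
  in_dom f x -> in_dom f y -> in_supp_plus x y i -> descent_step x y.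
Proof.
move=> hx hy hi; have [j [hj [lt_x | lt_y | [_ eq_y]]]] := ssqm hx hy hi.
- by left; exists (Some i), j; split.
- by right; exists (y + chi (Some i) - chi j); [apply: closer_exchange | apply: ltW].
- by right; exists (y + chi (Some i) - chi j); [apply: closer_exchange | rewrite eq_y].
Qed.

Lemma descent_step_supp_minus x y j :
  in_dom f x -> in_dom f y -> (forall k, ~ in_supp_plus x y k) ->
  in_supp_minus x y j -> descent_step x y.
Proof.
move=> hx hy noplus hj; have [[k|] [hk hf]] := ssqm hy hx hj.
  by case: (noplus k hk).
rewrite addr0 subr0 in hf.
have cy := closer_sub_chi hj.
case: hf => [lt_y | lt_x | [eq_y _]].
- by right; exists (y - chi (Some j)) => //; apply: ltW.
- by left; exists None, (Some j); rewrite subr0.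
- by right; exists (y - chi (Some j)); rewrite ?eq_y.
Qed.

Lemma descent_step_neq x y :
  in_dom f x -> in_dom f y -> x != y -> descent_step x y.
Proof.
move=> hx hy; case: (pickP (fun k => y ord0 k < x ord0 k)) => [i hi _ | noplus].
  exact: descent_step_supp_plus hi.
case: (pickP (fun k => x ord0 k < y ord0 k)) => [j hj _ | nominus].
  by apply: descent_step_supp_minus hj => // k; rewrite /in_supp_plus noplus.
case/eqP; apply/rowP => k.
by apply/eqP; rewrite eq_le !leNgt (noplus k) (nominus k).
Qed.

Lemma improving_exchange_of_lt x y :
  in_dom f x -> (f y < f x)%E -> improving_exchange x y.
Proof.
move=> hx; have [m] := ubnP (l1dist x y); elim: m y => // m IH y dy lt_yx.
have hy : in_dom f y by exact: lt_trans lt_yx hx.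
have neq_xy : x != y by apply: contraTneq lt_yx => ->; rewrite ltxx.
case: (descent_step_neq hx hy neq_xy) => [// | [y' cy le_y'y]].
apply: (improving_exchange_closer cy); apply: IH.
  by case: cy => _ /leq_trans; apply.
exact: le_lt_trans le_y'y lt_yx.
Qed.

End Descent.

Local Open Scope ereal_scope.

Theorem lemma2p4 (R : realType) (n : nat) (f : 'rV[int]_n -> \bar R) :
  no_minus_infty f -> SSQMnat f ->
  forall x y : 'rV[int]_n, in_dom f x -> in_dom f y ->
  f y < f x ->
  exists (i j : option 'I_n),
    [/\ in_supp_plus0 x y i, in_supp_minus0 x y j &
        f (x - chi i + chi j)%R < f x].
Proof.
move=> _ ssqm x y hx _ lt_yx.
exact: improving_exchange_of_lt.
Qed.
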